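(* In the four-player team game of dominoes described in the context, the following hold for games that end in a tranca: (a) the minimum, over all such games, of the number of tiles on the board at the end of the game is $10$; (b) the minimum, over all such games, of the total number of pips on the tiles of the board at the end of the game is $42$.
   Context: Domino tiles: the set of tiles consists of the 28 unordered pairs $[a,b]=[b,a]$ with $a,b\in\{0,1,\dots,6\}$; the number of points (pips) of $[a,b]$ is $a+b$. Four players, numbered 1 to 4, play; players 1 and 3 form one team and players 2 and 4 the other. The 28 tiles are dealt, 7 to each player (the initial hands). Players take turns in cyclic order $1,2,3,4,1,\dots$. The starting player places any one of their tiles on the table, forming a line of tiles (the board) with two open ends. On each subsequent turn, the player whose turn it is must, if they hold a tile containing a number equal to the number shown at one of the two open ends, place such a tile at that end (with equal numbers adjacent), the other number of the tile becoming the new open end; if they hold no such tile, they pass. A game ends either when a player places their last tile, or in a tranca (blocked game): a position in which no player holds a tile that can be placed. *)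

From mathcomp Require Import all_boot.
Set Implicit Arguments. Unset Strict Implicit. Unset Printing Implicit Defensive.

(* A tile [a,b] is represented by the normalized pair (a,b) with a <= b <= 6. *)
Definition tile := (nat * nat)%type.

Definition all_tiles : seq tile :=
  [seq (a, b) | a <- iota 0 7, b <- iota a (7 - a)].

Definition pips (t : tile) : nat := t.1 + t.2.

(* Players 1,2,3,4 of the paper are indexed 0,1,2,3. *)
Definition next_player (p : nat) : nat := p.+1 %% 4.

Record state := State {
  turn  : nat;
  hands : nat -> seq tile;
  ends  : nat * nat;
  board : seq tile           (* tiles on the board (as a multiset) *)
}.

Definition matches (t : tile) (x : nat) : bool := (t.1 == x) || (t.2 == x).
(* the number that becomes the new open end when t is placed on end x *)
Definition other (t : tile) (x : nat) : nat := if t.1 == x then t.2 else t.1.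

Definition playable (h : seq tile) (e : nat * nat) : bool :=
  has (fun t => matches t e.1 || matches t e.2) h.

Definition upd_hand (h : nat -> seq tile) (p : nat) (s : seq tile) :=
  fun j => if j == p then s else h j.

Definition blocked (s : state) : Prop :=
  forall i, i < 4 -> ~~ playable (hands s i) (ends s).

Definition someone_out (s : state) : Prop :=
  exists2 i, i < 4 & hands s i = [::].

Definition game_over (s : state) : Prop := someone_out s \/ blocked s.

(* One turn (after the opening move). *)
Inductive step : state -> state -> Prop :=
| step_left s t :
    ~ game_over s -> t \in hands s (turn s) -> matches t (ends s).1 ->
    step s (State (next_player (turn s))
                  (upd_hand (hands s) (turn s) (rem t (hands s (turn s))))
                  (other t (ends s).1, (ends s).2)
                  (t :: board s))
| step_right s t :
    ~ game_over s -> t \in hands s (turn s) -> matches t (ends s).2 ->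
    step s (State (next_player (turn s))
                  (upd_hand (hands s) (turn s) (rem t (hands s (turn s))))
                  ((ends s).1, other t (ends s).2)
                  (t :: board s))
| step_pass s :
    ~ game_over s -> ~~ playable (hands s (turn s)) (ends s) ->
    step s (State (next_player (turn s)) (hands s) (ends s) (board s)).

Inductive reach (s0 : state) : state -> Prop :=
| reach_refl : reach s0 s0
| reach_step s s' : reach s0 s -> step s s' -> reach s0 s'.

Definition valid_deal (h : nat -> seq tile) : Prop :=
  (forall i, i < 4 -> size (h i) = 7) /\
  perm_eq (h 0 ++ h 1 ++ h 2 ++ h 3) all_tiles.

Definition opening (h : nat -> seq tile) (t : tile) : state :=
  State (next_player 0) (upd_hand h 0 (rem t (h 0))) (t.1, t.2) [:: t].

Definition tranca_final (s : state) : Prop :=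
  exists h t, [/\ valid_deal h, t \in h 0, reach (opening h t) s,
                  blocked s & ~ someone_out s].

Definition board_tiles (s : state) : nat := size (board s).
Definition board_pips (s : state) : nat := sumn (map pips (board s)).

From mathcomp Require Import all_boot.
From mathcomp Require Import zify.
Set Implicit Arguments. Unset Strict Implicit. Unset Printing Implicit Defensive.

(* Along the line, adjacent halves show equal numbers, so every number occurs an
   even number of times among the halves on the board and the two open ends.
   In a tranca every tile matching an open end x lies on the board: this is the
   whole suit of x, whose halves show x eight times.  Any other number v < 7
   occurs on the board (on the tile [v,x]), hence at least twice by parity.  So
   the board carries at least 8 + 6 * 2 = 20 halves, i.e. 10 tiles, and at least
   2 * (0 + 1 + ... + 6) = 42 pips.  Both bounds are attained by a game that
   blocks with both ends 0 once the suit of 0 and [1,2], [3,4], [5,6] are down. *)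

Lemma mem_all_tiles (t : tile) : (t \in all_tiles) = (t.1 <= t.2 < 7).
Proof.
case: t => a b; apply/allpairsPdep/idP => [[a' [b' [+ + [-> ->]]]] | ab].
  by rewrite !mem_iota /=; lia.
by exists a, b; rewrite !mem_iota; move: ab => /= ab; split => //; lia.
Qed.

Lemma all_tiles_uniq : uniq all_tiles.
Proof. by []. Qed.

Definition halves (B : seq tile) : seq nat := flatten [seq [:: t.1; t.2] | t <- B].

Lemma size_halves B : size (halves B) = 2 * size B.
Proof. by elim: B => //= t B ->; rewrite mulnS. Qed.

Lemma sumn_halves B : sumn (halves B) = sumn (map pips B).
Proof. by elim: B => //= t B <-; rewrite /pips addnA. Qed.

Lemma count_halves v B :
  count_mem v (halves B) = \sum_(t <- B) count_mem v [:: t.1; t.2].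
Proof. by rewrite count_flatten sumnE !big_map. Qed.

Lemma sum_mul_eq_le (F : nat -> nat) n (x : nat) :
  \sum_(v < n) F v * (x == v) <= F x.
Proof.
have [xn|nx] := ltnP x n; last first.
  by rewrite big1 // => v _; rewrite gtn_eqF ?muln0 // (leq_trans (ltn_ord v)).
rewrite (bigD1 (Ordinal xn)) //= eqxx muln1 big1 ?addn0 // => v.
by rewrite -val_eqE /= eq_sym => /negbTE ->; rewrite muln0.
Qed.

Lemma sum_mul_count_mem_le (F : nat -> nat) n (s : seq nat) :
  \sum_(v < n) F v * count_mem (v : nat) s <= \sum_(x <- s) F x.
Proof.
elim: s => [|x s IHs]; first by rewrite big_nil big1 // => v _; rewrite muln0.
rewrite big_cons [leqLHS](eq_bigr (fun v : 'I_n =>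
  F v * (x == v) + F v * count_mem (v : nat) s)).
  by rewrite big_split /=; exact: leq_add (sum_mul_eq_le F n x) IHs.
by move=> v _; rewrite /= mulnDr.
Qed.

Definition suit (x : nat) : seq tile := [seq t <- all_tiles | matches t x].

Lemma count_halves_suit x : x < 7 -> count_mem x (halves (suit x)) = 8.
Proof. by do 7?[case: x => [|x] //]. Qed.

Lemma leq_count_halves (U B : seq tile) v : uniq U -> uniq B -> {subset U <= B} ->
  count_mem v (halves U) <= count_mem v (halves B).
Proof.
by rewrite !count_halves; apply: (uniq_sub_le_big leqnn (fun m n => leq_addr n m)).
Qed.

Definition hands_cat (h : nat -> seq tile) : seq tile := h 0 ++ h 1 ++ h 2 ++ h 3.

Lemma hands_catP h t : reflect (exists2 i, i < 4 & t \in h i) (t \in hands_cat h).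
Proof.
rewrite !mem_cat; apply: (iffP or4P) => [|[i]].
  by case=> t_i; [exists 0 | exists 1 | exists 2 | exists 3].
by case: i => [|[|[|[|i]]]] // _ ->; constructor.
Qed.

Lemma perm_hands_cat_rem h p t : p < 4 -> t \in h p ->
  perm_eq (t :: hands_cat (upd_hand h p (rem t (h p)))) (hands_cat h).
Proof.
move=> p4 t_p; apply/permP => a.
case: p p4 t_p => [|[|[|[|p]]]] // _ t_p;
  by rewrite /hands_cat /upd_hand /= !count_cat (permP (perm_to_rem t_p)) /=; lia.
Qed.

Definition open_halves (s : state) : seq nat :=
  (ends s).1 :: (ends s).2 :: halves (board s).

Definition wf_state (s : state) : Prop :=
  [/\ turn s < 4, perm_eq (board s ++ hands_cat (hands s)) all_tiles,
      (ends s).1 < 7, (ends s).2 < 7 &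
      forall v, ~~ odd (count_mem v (open_halves s))].

Lemma odd_count_place t x (e : bool) v H : matches t x ->
  odd ((other t x == v) + e + count_mem v [:: t.1, t.2 & H]) =
  odd ((x == v) + e + count_mem v H).
Proof.
case: t => a b; rewrite /matches /other /=.
case: eqP => [-> _|_ /eqP ->]; rewrite !oddD;
  by case: (odd (count_mem v H)); case: (_ == v); case: (_ == v); case: e.
Qed.

Lemma perm_place_all_tiles s t : wf_state s -> t \in hands s (turn s) ->
  perm_eq (t :: board s ++
             hands_cat (upd_hand (hands s) (turn s) (rem t (hands s (turn s)))))
          all_tiles.
Proof.
case=> turn4 deal_perm _ _ _ t_hand.
rewrite -cat1s perm_catCA; apply: perm_trans deal_perm.
by rewrite perm_cat2l perm_hands_cat_rem.
Qed.

Lemma other_lt7 s t x : wf_state s -> t \in hands s (turn s) -> other t x < 7.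
Proof.
case=> turn4 deal_perm _ _ _ t_hand.
have : t \in all_tiles.
  rewrite -(perm_mem deal_perm) mem_cat; apply/orP; right.
  by apply/hands_catP; exists (turn s).
rewrite mem_all_tiles /other => /andP [t12 t27].
by case: ifP => // _; apply: leq_ltn_trans t27.
Qed.

Lemma wf_step s s' : step s s' -> wf_state s -> wf_state s'.
Proof.
have turn_lt4 p : next_player p < 4 by rewrite /next_player ltn_pmod.
case=> {s s'} [s t _ t_hand t_end|s t _ t_hand t_end|s _ _] wf_s;
  case: (wf_s) => _ deal_perm e1_7 e2_7 even_s; split => //=.
- exact: perm_place_all_tiles.
- exact: other_lt7 wf_s t_hand.
- by move=> v; rewrite addnA odd_count_place // -addnA; apply: even_s.
- exact: perm_place_all_tiles.
- exact: other_lt7 wf_s t_hand.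
- by move=> v; rewrite addnCA addnA odd_count_place // -addnA addnCA; apply: even_s.
Qed.

Lemma wf_opening h t : valid_deal h -> t \in h 0 -> wf_state (opening h t).
Proof.
case=> _ deal_perm t_h0.
have : t \in all_tiles by rewrite -(perm_mem deal_perm) mem_cat t_h0.
rewrite mem_all_tiles => /andP [t12 t27]; split => //=.
- exact: perm_trans (perm_hands_cat_rem (isT : 0 < 4) t_h0) deal_perm.
- exact: leq_ltn_trans t12 t27.
- by move=> v; rewrite !oddD; case: (_ == v); case: (_ == v).
Qed.

Lemma wf_reach s0 s : wf_state s0 -> reach s0 s -> wf_state s.
Proof. by move=> wf_s0; elim=> // s1 s2 _ wf_s1 /wf_step; apply. Qed.

Section BlockedPosition.

Variable s : state.
Hypotheses (wf_s : wf_state s) (blocked_s : blocked s).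

Lemma board_uniq : uniq (board s).
Proof.
case: (wf_s) => _ deal_perm _ _ _.
by have := all_tiles_uniq; rewrite -(perm_uniq deal_perm) cat_uniq => /andP [].
Qed.

Lemma matching_tile_on_board t x : x \in [:: (ends s).1; (ends s).2] ->
  t \in all_tiles -> matches t x -> t \in board s.
Proof.
case: (wf_s) => _ deal_perm _ _ _ x_end; rewrite -(perm_mem deal_perm) mem_cat.
case/orP => // /hands_catP [i i4 t_i] t_x; have := blocked_s i4.
case/hasP; exists t => //.
by move: x_end; rewrite !inE => /orP [] /eqP <-; rewrite t_x ?orbT.
Qed.

Lemma count_halves_end x : x \in [:: (ends s).1; (ends s).2] ->
  8 <= count_mem x (halves (board s)).
Proof.
move=> x_end; have x7 : x < 7.
  by case: (wf_s) => _ _ e1_7 e2_7 _; move: x_end; rewrite !inE => /orP [] /eqP ->.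
rewrite -(count_halves_suit x7) leq_count_halves ?filter_uniq ?all_tiles_uniq //.
  by rewrite board_uniq.
move=> t; rewrite mem_filter => /andP [t_x t_tile].
exact: matching_tile_on_board x_end t_tile t_x.
Qed.

Lemma count_halves_gt1 v : v < 7 -> 2 <= count_mem v (halves (board s)).
Proof.
move=> v7; have [v_end|v_not_end] := boolP (v \in [:: (ends s).1; (ends s).2]).
  exact: leq_trans (count_halves_end v_end).
case: (wf_s) => _ _ e1_7 _ even_s.
have : v \in halves (board s).
  apply/flatten_mapP; exists (minn v (ends s).1, maxn v (ends s).1); last first.
    by rewrite /= !inE /minn /maxn; case: ltnP; rewrite eqxx ?orbT.
  apply: (matching_tile_on_board (x := (ends s).1)); first by rewrite mem_head.
    by rewrite mem_all_tiles /= geq_min leq_max leqnn /= gtn_max v7.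
  by rewrite /matches /minn /maxn /=; case: ltnP; rewrite eqxx ?orbT.
move: (even_s v) v_not_end.
rewrite /open_halves /= (eq_sym (ends s).1) (eq_sym (ends s).2) !inE negb_or.
move=> + /andP [/negbTE ve1 /negbTE ve2].
by rewrite ve1 ve2 -has_pred1 has_count; case: count => [|[|]].
Qed.

Lemma blocked_board_tiles : 10 <= board_tiles s.
Proof.
case: (wf_s) => _ _ e1_7 _ _; set e1 := Ordinal e1_7.
suff counts : 8 + 2 * 6 <= \sum_(v < 7) 1 * count_mem (v : nat) (halves (board s)).
  have := leq_trans counts (sum_mul_count_mem_le (fun=> 1) _ _).
  by rewrite sum1_size size_halves /board_tiles; lia.
rewrite (bigD1 e1) //=; apply: leq_add.
  by rewrite mul1n; apply: count_halves_end; rewrite mem_head.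
have -> : 2 * 6 = \sum_(v < 7 | v != e1) 2 by rewrite sum_nat_const cardC1 card_ord.
by apply: leq_sum => v _; rewrite mul1n count_halves_gt1.
Qed.

Lemma blocked_board_pips : 42 <= board_pips s.
Proof.
rewrite /board_pips -sumn_halves sumnE.
apply: leq_trans (sum_mul_count_mem_le id 7 _).
apply: (@leq_trans (\sum_(v < 7) v * 2)); first by rewrite !big_ord_recr big_ord0.
by apply: leq_sum => v _; rewrite leq_mul2l count_halves_gt1 ?orbT.
Qed.

End BlockedPosition.

Lemma tranca_final_wf s : tranca_final s -> wf_state s /\ blocked s.
Proof.
case=> h [t [deal t_h0 reach_s blocked_s _]].
by split => //; apply: wf_reach (wf_opening deal t_h0) reach_s.
Qed.

Definition someone_outb (s : state) : bool :=
  has (fun i => hands s i == [::]) (iota 0 4).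

Lemma someone_outP s : reflect (someone_out s) (someone_outb s).
Proof.
apply: (iffP hasP) => [[i] | [i]]; rewrite ?mem_iota => i4 /eqP hi.
  by exists i.
by exists i; rewrite ?mem_iota.
Qed.

Definition blockedb (s : state) : bool :=
  all (fun i => ~~ playable (hands s i) (ends s)) (iota 0 4).

Lemma blockedP s : reflect (blocked s) (blockedb s).
Proof.
apply: (iffP allP) => blocked_s i; rewrite ?mem_iota => i4.
  by apply: blocked_s; rewrite mem_iota.
exact: blocked_s.
Qed.

Lemma game_overP s : reflect (game_over s) (someone_outb s || blockedb s).
Proof. exact: orPP (someone_outP s) (blockedP s). Qed.

Inductive move := PlayLeft of tile | PlayRight of tile | Pass.

Definition play (s : state) (m : move) : state :=
  match m with
  | PlayLeft t => State (next_player (turn s))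
                    (upd_hand (hands s) (turn s) (rem t (hands s (turn s))))
                    (other t (ends s).1, (ends s).2) (t :: board s)
  | PlayRight t => State (next_player (turn s))
                     (upd_hand (hands s) (turn s) (rem t (hands s (turn s))))
                     ((ends s).1, other t (ends s).2) (t :: board s)
  | Pass => State (next_player (turn s)) (hands s) (ends s) (board s)
  end.

Definition legal_move (s : state) (m : move) : bool :=
  ~~ (someone_outb s || blockedb s) &&
  match m with
  | PlayLeft t => (t \in hands s (turn s)) && matches t (ends s).1
  | PlayRight t => (t \in hands s (turn s)) && matches t (ends s).2
  | Pass => ~~ playable (hands s (turn s)) (ends s)
  end.

Lemma legal_move_step s m : legal_move s m -> step s (play s m).
Proof.
case/andP => /game_overP not_over; case: m => [t|t|] /=.
- by case/andP; apply: step_left.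
- by case/andP; apply: step_right.
- exact: step_pass.
Qed.

Fixpoint play_all (s : state) (ms : seq move) : state :=
  if ms is m :: ms' then play_all (play s m) ms' else s.

Fixpoint legal_moves (s : state) (ms : seq move) : bool :=
  if ms is m :: ms' then legal_move s m && legal_moves (play s m) ms' else true.

Lemma legal_moves_reach s0 s ms :
  reach s0 s -> legal_moves s ms -> reach s0 (play_all s ms).
Proof.
elim: ms s => [|m ms IHms] s //= reach_s /andP [legal_m legal_ms].
exact: IHms (reach_step reach_s (legal_move_step legal_m)) legal_ms.
Qed.

Definition example_deal (i : nat) : seq tile :=
  match i with
  | 0 => [:: (3, 3); (3, 6); (0, 4); (4, 6); (2, 6); (0, 6); (1, 1)]
  | 1 => [:: (1, 3); (0, 1); (1, 4); (2, 4); (1, 2); (6, 6); (2, 2)]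
  | 2 => [:: (2, 5); (3, 4); (5, 6); (3, 5); (1, 6); (0, 5); (4, 5)]
  | _ => [:: (4, 4); (5, 5); (0, 0); (2, 3); (1, 5); (0, 3); (0, 2)]
  end.

Definition example_moves : seq move :=
  [:: PlayLeft (0, 1); PlayRight (3, 4); PlayRight (0, 3); PlayRight (0, 6);
      PlayLeft (1, 2); PlayRight (5, 6); PlayLeft (0, 2); Pass; Pass;
      PlayRight (0, 5); PlayRight (0, 0)].

Definition example_final : state :=
  play_all (opening example_deal (0, 4)) example_moves.

Lemma example_final_tranca : tranca_final example_final.
Proof.
exists example_deal, (0, 4); split.
- by split; [case=> [|[|[|[|i]]]] | vm_compute].
- by [].
- exact: legal_moves_reach (reach_refl _) _.
- exact/blockedP.
- exact/someone_outP.
Qed.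

Theorem mainTheorem3 :
  ((exists s, tranca_final s /\ board_tiles s = 10) /\
   (forall s, tranca_final s -> 10 <= board_tiles s)) /\
  ((exists s, tranca_final s /\ board_pips s = 42) /\
   (forall s, tranca_final s -> 42 <= board_pips s)).
Proof.
split; split.
- by exists example_final; split; [exact: example_final_tranca | vm_compute].
- by move=> s /tranca_final_wf [wf_s blocked_s]; exact: blocked_board_tiles.
- by exists example_final; split; [exact: example_final_tranca | vm_compute].
- by move=> s /tranca_final_wf [wf_s blocked_s]; exact: blocked_board_pips.
Qed.
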